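(* Consider, under stochastic mass-action kinetics, the reaction networks W3: $S_1\underset{\beta}{\overset{\alpha}{\rightleftharpoons}}S_2$, $2S_1\underset{\lambda_2}{\overset{\lambda_1}{\rightleftharpoons}}2S_2$, and W4: $2S_1\underset{\lambda_5}{\overset{\lambda_3}{\rightleftharpoons}}S_1+S_2$, $2S_1\underset{\lambda_2}{\overset{\lambda_1}{\rightleftharpoons}}2S_2$. For each of them and every positive rate vector $\kappa$, $(\mathcal{G},\kappa)$ has product-form stationary distribution if and only if $(\mathcal{G},\kappa)$ is complex balanced.
   Context: Stochastic mass-action kinetics: reaction $\nu\to\nu'$ with rate $\kappa$ moves state $x\in\mathbb{Z}^2_{\ge0}$ to $x+\nu'-\nu$ with intensity $\kappa\frac{x!}{(x-\nu)!}\mathbf{1}_{x\ge\nu}$, $z!=z_1!z_2!$. $(\mathcal{G},\kappa)$ has product-form stationary distribution if there are $f_1,f_2:\mathbb{Z}_{\ge0}\to\mathbb{R}_{>0}$ such that on every positive recurrent irreducible component $\Gamma$ (nonempty set closed under reachability with every state reachable from every other) the stationary distribution is $\pi_\Gamma(x)=Z_\Gamma^{-1}f_1(x_1)f_2(x_2)$. $(\mathcal{G},\kappa)$ is complex balanced if there is $c\in\mathbb{R}^2_{>0}$ such that for every complex $\eta$, $\sum_{\nu\to\eta}\kappa_{\nu\to\eta}c^\nu=\sum_{\eta\to\nu'}\kappa_{\eta\to\nu'}c^\eta$. *)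

From HB Require Import structures.
From mathcomp Require Import all_boot all_order all_algebra.
From mathcomp Require Import reals.
From Stdlib Require Import Relation_Operators.
Set Implicit Arguments. Unset Strict Implicit. Unset Printing Implicit Defensive.
Import Order.TTheory GRing.Theory Num.Theory.
Local Open Scope ring_scope.

Notation state := (nat * nat)%type.

(* A (rated) reaction network: a list of reactions (nu, nu', kappa) meaning
   nu -> nu' with rate constant kappa. *)
Definition network (R : realType) := seq (state * state * R).

Definition leS (nu x : state) : bool := ((nu.1 <= x.1) && (nu.2 <= x.2))%N.

(* x + nu' - nu (only used when nu <= x) *)
Definition shiftS (x nu nu' : state) : state :=
  ((x.1 - nu.1 + nu'.1)%N, (x.2 - nu.2 + nu'.2)%N).

(* mass-action intensity  kappa * x!/(x-nu)! * 1_{x >= nu};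
   the falling factorial n ^_ m is 0 when m > n. *)
Definition intensity (R : realType) (kappa : R) (nu x : state) : R :=
  kappa * ((x.1 ^_ nu.1) * (x.2 ^_ nu.2))%:R.

Definition rate (R : realType) (N : network R) (x y : state) : R :=
  if x == y then 0 else
  \sum_(r <- N | (shiftS x r.1.1 r.1.2 == y)) intensity r.2 r.1.1 x.

Definition step (R : realType) (N : network R) (x y : state) : Prop :=
  exists r, r \in N /\ 0 < intensity r.2 r.1.1 x /\ y = shiftS x r.1.1 r.1.2.

Definition reach (R : realType) (N : network R) : state -> state -> Prop :=
  clos_refl_trans state (@step R N).

(* A positive recurrent irreducible component, given by a duplicate-free
   enumeration s: nonempty, closed under
   reachability, every state reachable from every other, and finite. *)
Definition pr_component (R : realType) (N : network R) (s : seq state) : Prop :=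
  [/\ s != [::], uniq s,
      (forall x y, x \in s -> reach N x y -> y \in s) &
      (forall x y, x \in s -> y \in s -> reach N x y)].

Definition stationary (R : realType) (N : network R) (s : seq state)
  (pi : state -> R) : Prop :=
  [/\ (forall x, x \in s -> 0 <= pi x),
      \sum_(x <- s) pi x = 1 &
      (forall y, y \in s ->
         \sum_(x <- s) pi x * rate N x y = pi y * \sum_(z <- s) rate N y z)].

Definition has_product_form (R : realType) (N : network R) : Prop :=
  exists f1 f2 : nat -> R,
    [/\ (forall n, 0 < f1 n), (forall n, 0 < f2 n) &
        forall s, pr_component N s ->
        forall pi, stationary N s pi ->
        forall x, x \in s ->
          pi x = f1 x.1 * f2 x.2 / \sum_(y <- s) f1 y.1 * f2 y.2].

Definition monom (R : realType) (c : R * R) (nu : state) : R :=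
  c.1 ^+ nu.1 * c.2 ^+ nu.2.

Definition complex_balanced (R : realType) (N : network R) : Prop :=
  exists c : R * R, [/\ 0 < c.1, 0 < c.2 &
    forall eta : state,
      \sum_(r <- N | r.1.2 == eta) r.2 * monom c r.1.1 =
      \sum_(r <- N | r.1.1 == eta) r.2 * monom c eta].

Definition W3 (R : realType) (alpha beta l1 l2 : R) : network R :=
  [:: ((1,0)%N, (0,1)%N, alpha); ((0,1)%N, (1,0)%N, beta);
      ((2,0)%N, (0,2)%N, l1); ((0,2)%N, (2,0)%N, l2)].

Definition W4 (R : realType) (l3 l5 l1 l2 : R) : network R :=
  [:: ((2,0)%N, (1,1)%N, l3); ((1,1)%N, (2,0)%N, l5);
      ((2,0)%N, (0,2)%N, l1); ((0,2)%N, (2,0)%N, l2)].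

From mathcomp Require Import all_boot all_order all_algebra.
From mathcomp Require Import reals ring zify.
From Stdlib Require Import Relation_Operators.
Set Implicit Arguments. Unset Strict Implicit. Unset Printing Implicit Defensive.
Import Order.TTheory GRing.Theory Num.Theory.
Local Open Scope ring_scope.

(* Both networks consist of reversible reaction pairs and conserve x1 + x2, so
   every slice x1 + x2 = n on which the chain is irreducible is a positive
   recurrent component (for W3 every slice, for W4 those with n >= 2).

   Complex balance of W3 and W4 amounts to detailed balance at some c > 0:
   each reaction pair contains a complex lying in no other pair, and balance
   at that complex is the pair's detailed-balance condition.  Then the product
   of Poisson laws with means c1, c2 satisfies detailed balance for the chain,
   and by the maximum principle for pi / p on an irreducible component it is,
   once normalised, the only stationary distribution there: product form.

   Conversely, a product form f1 x1 * f2 x2 must be proportional on each slice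
   to that slice's explicitly computed stationary distribution w.  Products of
   f over states with the same coordinates and slices agree, e.g.
   f(1,0) f(2,1) f(0,2) = f(0,1) f(1,2) f(2,0) for W3, so the corresponding
   cross ratio of w is 1; it factors as a positive polynomial times
   beta^2 l1 - alpha^2 l2 (resp. l5^2 l1 - l3^2 l2 for W4, using
   f(2,1) f(1,3) f(0,2) = f(2,2) f(1,1) f(0,3)), which is exactly the detailed
   balance condition at c = (beta, alpha) (resp. (l5, l3)). *)

Section MassActionChain.
Variable R : realType.
Implicit Types (N : network R) (k : R) (nu x y : state) (s : seq state).

Lemma intensity_ge0 k nu x : 0 <= k -> 0 <= intensity k nu x.
Proof. by move=> k_ge0; rewrite /intensity mulr_ge0 // ler0n. Qed.

Lemma intensity_gt0 k nu x : 0 < k -> leS nu x -> 0 < intensity k nu x.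
Proof. by move=> k_gt0 /andP[le1 le2]; rewrite mulr_gt0 // ltr0n muln_gt0 !ffact_gt0 le1. Qed.

Lemma intensity_eq0 k nu x : ~~ leS nu x -> intensity k nu x = 0.
Proof.
rewrite negb_and -!ltnNge => /orP[] lt_x_nu.
  by rewrite /intensity ffact_small // mul0n mulr0.
by rewrite /intensity [(x.2 ^_ _)%N]ffact_small // muln0 mulr0.
Qed.

Definition nonneg_rates N := forall r, r \in N -> 0 <= r.2.

Lemma rate_ge0 N x y : nonneg_rates N -> 0 <= rate N x y.
Proof.
move=> N_ge0; rewrite /rate; case: eqP => // _.
by rewrite big_seq_cond sumr_ge0 // => r /andP[/N_ge0 /intensity_ge0].
Qed.

Lemma rate_gt0 N x y : nonneg_rates N -> step N x y -> x != y -> 0 < rate N x y.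
Proof.
move=> N_ge0 [r [rN [r_gt0 ->]]] neq_xy; rewrite lt_def rate_ge0 // andbT.
rewrite /rate (negbTE neq_xy) big_seq_cond psumr_neq0.
  by apply/hasP; exists r; rewrite // rN eqxx r_gt0.
by move=> r' /andP[/N_ge0 /intensity_ge0].
Qed.

(* Complex first, so that e.g. [addS (2, 0) (i, j)] is convertible to [(i.+2, j)]. *)
Definition addS x y : state := (x.1 + y.1, x.2 + y.2)%N.

Lemma shiftS_addS nu nu' w : shiftS (addS nu w) nu nu' = addS nu' w.
Proof. by rewrite /shiftS /addS /= !addKn (addnC nu'.1) (addnC nu'.2). Qed.

Lemma reaction_reach N nu nu' k w :
  (nu, nu', k) \in N -> 0 < k -> reach N (addS nu w) (addS nu' w).
Proof.
move=> rN k_gt0; apply: rt_step; exists (nu, nu', k).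
by rewrite shiftS_addS intensity_gt0 // /leS !leq_addr.
Qed.

Lemma exists_argmax_seq (T : eqType) (t : seq T) (h : T -> R) :
  t != [::] -> exists2 m, m \in t & forall u, u \in t -> h u <= h m.
Proof.
elim: t => [//|a t IH] _; have [->|/IH[m mt hm]] := eqVneq t [::].
  by exists a; rewrite ?mem_head // => u; rewrite inE => /eqP->.
have [le_am|lt_ma] := leP (h a) (h m).
  by exists m => [|u]; rewrite inE ?mt ?orbT // => /predU1P[->|/hm].
exists a => [|u]; rewrite ?mem_head // inE => /predU1P[->//|/hm le_um].
exact: le_trans le_um (ltW lt_ma).
Qed.

Definition harmonic N s (h : state -> R) :=
  forall y, y \in s -> \sum_(x <- s) (h y - h x) * rate N y x = 0.

Lemma harmonic_const N s h : nonneg_rates N -> pr_component N s -> harmonic N s h ->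
  forall x y, x \in s -> y \in s -> h x = h y.
Proof.
move=> N_ge0 [s_neq0 _ s_closed s_irr] h_harm.
have [y0 y0s h_max] := exists_argmax_seq h s_neq0.
have max_step a b : a \in s -> h a = h y0 -> step N a b -> h b = h y0.
  move=> a_s ha ab; have [<-//|neq_ab] := eqVneq a b.
  have b_s : b \in s by apply: s_closed a_s (rt_step _ _ _ _ ab).
  have terms_ge0 x : (x \in s) && true -> 0 <= (h a - h x) * rate N a x.
    by case/andP=> x_s _; rewrite mulr_ge0 ?rate_ge0 // subr_ge0 ha h_max.
  move/eqP: (h_harm a a_s); rewrite big_seq_cond psumr_eq0 // => /allP/(_ b b_s).
  rewrite b_s mulf_eq0 (gt_eqF (rate_gt0 N_ge0 ab neq_ab)) orbF subr_eq0 /=.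
  by rewrite -ha eq_sym => /eqP.
have max_reach a b : reach N a b -> a \in s -> h a = h y0 -> h b = h y0.
  elim=> [u v /max_step//| //| u v w uv IHuv _ IHvw u_s hu].
  exact: IHvw (s_closed u v u_s uv) (IHuv u_s hu).
have h_y0 z : z \in s -> h z = h y0.
  by move=> z_s; apply: max_reach (s_irr _ _ y0s z_s) y0s _.
by move=> x y x_s y_s; rewrite !h_y0.
Qed.

Lemma sumr_gt0_seq (T : eqType) (t : seq T) (F : T -> R) :
  t != [::] -> (forall u, u \in t -> 0 < F u) -> 0 < \sum_(u <- t) F u.
Proof.
case: t => [//|a t] _ F_gt0; rewrite big_cons ltr_wpDr ?F_gt0 ?mem_head //.
by rewrite big_seq sumr_ge0 // => u u_t; rewrite ltW // F_gt0 // inE u_t orbT.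
Qed.

Lemma detailed_balance_stationary N s (p : state -> R) pi :
  nonneg_rates N -> (forall x, 0 < p x) ->
  (forall x y, p x * rate N x y = p y * rate N y x) ->
  pr_component N s -> stationary N s pi ->
  forall x, x \in s -> pi x = p x / \sum_(y <- s) p y.
Proof.
move=> N_ge0 p_gt0 p_db s_pr [_ pi_sum1 pi_bal] x x_s.
pose h z := pi z / p z.
have pi_h z : pi z = h z * p z by rewrite divfK ?gt_eqF.
have h_harm : harmonic N s h.
  move=> y y_s; apply: (mulfI (lt0r_neq0 (p_gt0 y))); rewrite mulr0.
  transitivity (pi y * \sum_(z <- s) rate N y z - \sum_(z <- s) pi z * rate N z y).
    rewrite !mulr_sumr -sumrB; apply: eq_bigr => z _.
    by rewrite !pi_h -[h z * p z * _]mulrA p_db; ring.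
  by rewrite pi_bal // subrr.
have pi_hx z : z \in s -> pi z = h x * p z.
  by move=> z_s; rewrite pi_h (harmonic_const N_ge0 s_pr h_harm z_s x_s).
have sum_p : h x * \sum_(y <- s) p y = 1.
  by rewrite -pi_sum1 mulr_sumr big_seq [RHS]big_seq; apply: eq_bigr => z /pi_hx.
have [s_neq0 _ _ _] := s_pr.
rewrite pi_hx // -[RHS]mul1r -sum_p; field.
by rewrite gt_eqF // sumr_gt0_seq.
Qed.

Definition global_balance N s (w : state -> R) :=
  forall y, y \in s -> \sum_(x <- s) w x * rate N x y = w y * \sum_(z <- s) rate N y z.

Lemma stationary_normalize N s (w : state -> R) :
  s != [::] -> (forall x, x \in s -> 0 < w x) -> global_balance N s w ->
  stationary N s (fun x => w x / \sum_(y <- s) w y).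
Proof.
move=> s_neq0 w_gt0 w_bal; have sum_gt0 := sumr_gt0_seq s_neq0 w_gt0.
split=> [x x_s | | y y_s]; first by rewrite divr_ge0 ?ltW ?w_gt0.
  by rewrite -mulr_suml mulfV ?gt_eqF.
rewrite mulrAC -w_bal // mulr_suml; apply: eq_bigr => x _; exact: mulrAC.
Qed.

Definition product_form_by N (f1 f2 : nat -> R) :=
  forall s, pr_component N s -> forall pi, stationary N s pi ->
  forall x, x \in s -> pi x = f1 x.1 * f2 x.2 / \sum_(y <- s) f1 y.1 * f2 y.2.

Lemma product_form_proportional N f1 f2 s (w : state -> R) :
  product_form_by N f1 f2 -> pr_component N s ->
  (forall x, x \in s -> 0 < w x) -> global_balance N s w ->
  exists2 K, K != 0 & forall i j, (i, j) \in s -> f1 i * f2 j = K * w (i, j).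
Proof.
move=> pf s_pr w_gt0 w_bal; have [s_neq0 _ _ _] := s_pr.
have w_pf := pf s s_pr _ (stationary_normalize s_neq0 w_gt0 w_bal).
have sum_w_gt0 := sumr_gt0_seq s_neq0 w_gt0.
set F := \sum_(y <- s) f1 y.1 * f2 y.2 in w_pf.
have [x0 x0_s] : exists x0, x0 \in s.
  by move: s_neq0; case: (s) => // x0 t _; exists x0; exact: mem_head.
have F_neq0 : F != 0.
  apply/eqP => F0; move: (w_pf x0 x0_s); rewrite F0 invr0 mulr0.
  by move/eqP; rewrite gt_eqF // divr_gt0 // w_gt0.
exists (F / \sum_(y <- s) w y) => [|i j ij_s].
  by rewrite mulf_eq0 invr_eq0 negb_or F_neq0 lt0r_neq0.
by rewrite -[LHS](divfK F_neq0) -(w_pf _ ij_s); ring.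
Qed.

End MassActionChain.

Section Levels.
Variable R : realType.
Implicit Types (N : network R) (x y : state).

Definition level (n : nat) : seq state := [seq (i, n - i)%N | i <- iota 0 n.+1].

Lemma levelP n x : reflect (exists2 i, (i <= n)%N & x = (i, n - i)%N) (x \in level n).
Proof.
apply: (iffP mapP) => [[i]|[i le_in ->]]; last by exists i; rewrite // mem_iota.
by rewrite mem_iota => /andP[_ lt_in] ->; exists i.
Qed.

Lemma mem_level n x : (x \in level n) = (x.1 + x.2 == n)%N.
Proof.
apply/levelP/eqP => [[i le_in ->]|<-]; first by rewrite /= subnKC.
by exists x.1; rewrite ?leq_addr // addKn; case: x.
Qed.

Lemma level_uniq n : uniq (level n).
Proof. by rewrite map_inj_uniq ?iota_uniq // => i j []. Qed.

Definition conservative N :=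
  forall r, r \in N -> (r.1.1.1 + r.1.1.2 = r.1.2.1 + r.1.2.2)%N.

Lemma step_conservative N x y : conservative N -> step N x y ->
  (y.1 + y.2 = x.1 + x.2)%N.
Proof.
move=> N_cons [[[nu nu'] k] [rN [r_gt0 ->]]].
have /andP[] : leS nu x by apply: contraLR r_gt0 => /intensity_eq0 ->; rewrite ltxx.
by have /= := N_cons _ rN; rewrite /shiftS /=; lia.
Qed.

Lemma level_pr_component N n : conservative N ->
  (forall x y, x \in level n -> y \in level n -> reach N x y) ->
  pr_component N (level n).
Proof.
move=> N_cons level_irr; split=> //; first exact: level_uniq.
move=> x y + xy; elim: xy => // [u v uv|u v w _ IHuv _ IHvw /IHuv/IHvw//].
by rewrite !mem_level (step_conservative N_cons uv).
Qed.

End Levels.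

Section PoissonProductForm.
Variable R : realType.
Implicit Types (k : R) (c : R * R) (nu w x y : state).

Definition poisson (a : R) (n : nat) : R := a ^+ n / n`!%:R.

Definition poisson2 c x : R := poisson c.1 x.1 * poisson c.2 x.2.

Lemma poisson_gt0 a n : 0 < a -> 0 < poisson a n.
Proof. by move=> a_gt0; rewrite divr_gt0 ?exprn_gt0 // ltr0n fact_gt0. Qed.

Lemma poisson_ffact a n m : poisson a (n + m) * ((n + m) ^_ m)%:R = a ^+ m * poisson a n.
Proof.
rewrite /poisson -(ffact_fact (leq_addl n m)) addnK natrM exprD.
have fact_neq0 : n`!%:R != 0 :> R by rewrite pnatr_eq0 -lt0n fact_gt0.
have ffact_neq0 : ((n + m) ^_ m)%:R != 0 :> R.
  by rewrite pnatr_eq0 -lt0n ffact_gt0 leq_addl.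
by field; rewrite fact_neq0 ffact_neq0.
Qed.

Lemma poisson2_intensity c k nu w :
  poisson2 c (addS nu w) * intensity k nu (addS nu w) = k * monom c nu * poisson2 c w.
Proof.
rewrite /poisson2 /intensity /monom /= natrM (addnC nu.1) (addnC nu.2).
transitivity (k * ((poisson c.1 (w.1 + nu.1) * ((w.1 + nu.1) ^_ nu.1)%:R) *
                   (poisson c.2 (w.2 + nu.2) * ((w.2 + nu.2) ^_ nu.2)%:R))); first ring.
by rewrite !poisson_ffact; ring.
Qed.

Definition reacts nu nu' x y := leS nu x && (shiftS x nu nu' == y).

Lemma reactsP nu nu' x y :
  reflect (exists w, x = addS nu w /\ y = addS nu' w) (reacts nu nu' x y).
Proof.
apply: (iffP andP) => [[/andP[le1 le2] /eqP<-]|[w [-> ->]]]; last first.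
  by rewrite shiftS_addS /leS !leq_addr.
pose w := (x.1 - nu.1, x.2 - nu.2)%N.
have x_eq : x = addS nu w by rewrite /addS /= !subnKC //; case: x {le1 le2 w}.
by exists w; split=> //; rewrite {1}x_eq shiftS_addS.
Qed.

Lemma reactsC nu nu' x y : reacts nu nu' x y = reacts nu' nu y x.
Proof. by apply/reactsP/reactsP => -[w [-> ->]]; exists w. Qed.

Lemma reaction_flux k nu nu' x y :
  (if shiftS x nu nu' == y then intensity k nu x else 0) =
  (if reacts nu nu' x y then intensity k nu x else 0).
Proof. by rewrite /reacts; case: (boolP (leS nu x)) => // /intensity_eq0->; case: ifP. Qed.

Lemma poisson2_reaction_balance c nu nu' k k' x y :
  k * monom c nu = k' * monom c nu' ->
  poisson2 c x * (if reacts nu nu' x y then intensity k nu x else 0) =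
  poisson2 c y * (if reacts nu' nu y x then intensity k' nu' y else 0).
Proof.
rewrite -reactsC => kc; case: reactsP => [[w [-> ->]]|_]; last by rewrite !mulr0.
by rewrite !poisson2_intensity kc.
Qed.

Definition reversible (P : seq (state * state * R * R)) : network R :=
  flatten [seq let: (nu, nu', k, k') := p in [:: (nu, nu', k); (nu', nu, k')] | p <- P].

Definition detailed_balanced (P : seq (state * state * R * R)) c :=
  forall nu nu' k k', (nu, nu', k, k') \in P -> k * monom c nu = k' * monom c nu'.

Lemma detailed_balanced2 nu1 nu1' k1 k1' nu2 nu2' k2 k2' c :
  detailed_balanced [:: (nu1, nu1', k1, k1'); (nu2, nu2', k2, k2')] c <->
  k1 * monom c nu1 = k1' * monom c nu1' /\ k2 * monom c nu2 = k2' * monom c nu2'.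
Proof.
split=> [c_db | [db1 db2] nu nu' k k'].
  by split; apply: c_db; rewrite !inE eqxx ?orbT.
by rewrite !inE => /orP[] /eqP[-> -> -> ->].
Qed.

Lemma reversible_cons nu nu' k k' P :
  reversible ((nu, nu', k, k') :: P) = (nu, nu', k) :: (nu', nu, k') :: reversible P.
Proof. by []. Qed.

Lemma poisson2_detailed_balance P c : detailed_balanced P c ->
  forall x y, poisson2 c x * rate (reversible P) x y = poisson2 c y * rate (reversible P) y x.
Proof.
move=> P_db x y; rewrite /rate [y == x]eq_sym; case: eqP => _; first by rewrite !mulr0.
rewrite [in LHS]big_mkcond [in RHS]big_mkcond.
elim: P P_db => [|[[[nu nu'] k] k'] P IH] P_db; first by rewrite !big_nil !mulr0.
have nu_db : k * monom c nu = k' * monom c nu' by apply: P_db; exact: mem_head.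
have P'_db : detailed_balanced P c.
  by move=> ? ? ? ? P_mem; apply: P_db; rewrite in_cons P_mem orbT.
rewrite reversible_cons !big_cons !mulrDr /= !reaction_flux (IH P'_db).
rewrite (poisson2_reaction_balance x y nu_db) (poisson2_reaction_balance x y (esym nu_db)).
by rewrite addrCA.
Qed.

Lemma reversible_product_form P c :
  0 < c.1 -> 0 < c.2 -> nonneg_rates (reversible P) -> detailed_balanced P c ->
  has_product_form (reversible P).
Proof.
move=> c1_gt0 c2_gt0 P_ge0 P_db; exists (poisson c.1), (poisson c.2).
split=> [n|n|s s_pr pi pi_stat]; rewrite ?poisson_gt0 //.
apply: detailed_balance_stationary P_ge0 _ (poisson2_detailed_balance P_db) s_pr pi_stat.
by move=> x; rewrite mulr_gt0 ?poisson_gt0.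
Qed.

End PoissonProductForm.

Section W3.
Variables (R : realType) (alpha beta l1 l2 : R).
Hypotheses (alpha_gt0 : 0 < alpha) (beta_gt0 : 0 < beta) (l1_gt0 : 0 < l1) (l2_gt0 : 0 < l2).
Local Notation N := (W3 alpha beta l1 l2).

Definition W3_pairs : seq (state * state * R * R) :=
  [:: ((1, 0), (0, 1), alpha, beta); ((2, 0), (0, 2), l1, l2)]%N.

Lemma W3_reversible : N = reversible W3_pairs.
Proof. by []. Qed.

Lemma W3_nonneg_rates : nonneg_rates N.
Proof. by move=> r; rewrite !inE => /or4P[] /eqP-> /=; apply: ltW. Qed.

Lemma W3_conservative : conservative N.
Proof. by move=> r; rewrite !inE => /or4P[] /eqP->. Qed.

Lemma W3_reach_S1_to_S2 i j : reach N (i.+1, j) (i, j.+1).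
Proof. by apply: (@reaction_reach _ _ (1, 0) (0, 1) alpha (i, j)); rewrite ?inE ?eqxx. Qed.

Lemma W3_reach_S2_to_S1 i j : reach N (i, j.+1) (i.+1, j).
Proof.
by apply: (@reaction_reach _ _ (0, 1) (1, 0) beta (i, j)); rewrite ?inE ?eqxx ?orbT.
Qed.

Lemma W3_level_pr_component n : pr_component N (level n).
Proof.
apply: level_pr_component W3_conservative _ => x y.
have to_hub i j : reach N (i, j) (0, i + j)%N.
  elim: i j => [|i IH] j; first exact: rt_refl.
  by rewrite addSnnS; apply: rt_trans (W3_reach_S1_to_S2 i j) (IH j.+1).
have from_hub i j : reach N (0, i + j)%N (i, j).
  elim: i j => [|i IH] j; first exact: rt_refl.
  by rewrite addSnnS; apply: rt_trans (IH j.+1) (W3_reach_S2_to_S1 i j).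
case: x y => [i j] [i' j']; rewrite !mem_level => /eqP ij /eqP i'j'.
by apply: rt_trans (to_hub i j) _; rewrite ij -i'j'; exact: from_hub.
Qed.

(* Unnormalised stationary distributions of the chain restricted to the
   slices x1 + x2 = 1, 2, 3, each slice scaled independently. *)
Definition W3_weight (x : state) : R :=
  match x with
  | (1, 0)%N => beta
  | (0, 1)%N => alpha
  | (2, 0)%N => alpha * l2 + beta ^+ 2 + beta * l2
  | (1, 1)%N => 2 * alpha * beta + 2 * alpha * l2 + 2 * beta * l1
  | (0, 2)%N => alpha ^+ 2 + alpha * l1 + beta * l1
  | (3, 0)%N => 3 * alpha * beta * l2 + 4 * alpha * l2 ^+ 2 + beta ^+ 3
                + 3 * beta ^+ 2 * l2 + 2 * beta * l1 * l2 + 2 * beta * l2 ^+ 2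
  | (2, 1)%N => 3 * alpha ^+ 2 * l2 + 3 * alpha * beta ^+ 2 + 9 * alpha * beta * l2
                + 6 * alpha * l1 * l2 + 6 * alpha * l2 ^+ 2 + 6 * beta ^+ 2 * l1
                + 12 * beta * l1 * l2
  | (1, 2)%N => 3 * alpha ^+ 2 * beta + 6 * alpha ^+ 2 * l2 + 9 * alpha * beta * l1
                + 12 * alpha * l1 * l2 + 3 * beta ^+ 2 * l1 + 6 * beta * l1 ^+ 2
                + 6 * beta * l1 * l2
  | (0, 3)%N => alpha ^+ 3 + 3 * alpha ^+ 2 * l1 + 3 * alpha * beta * l1
                + 2 * alpha * l1 ^+ 2 + 2 * alpha * l1 * l2 + 4 * beta * l1 ^+ 2
  | _ => 0
  end.

Lemma W3_weight_gt0 n x : (0 < n <= 3)%N -> x \in level n -> 0 < W3_weight x.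
Proof.
case: n => [|[|[|[|//]]]] // _ /levelP[[|[|[|[|i]]]] //= _ ->];
  by rewrite ?(addr_gt0, mulr_gt0, exprn_gt0, ltr0n).
Qed.

Lemma W3_weight_balance n : (0 < n <= 3)%N -> global_balance N (level n) W3_weight.
Proof.
case: n => [|[|[|[|//]]]] // _ y /levelP[[|[|[|[|i]]]] //= _ ->];
  rewrite /level /rate /= !big_cons !big_nil /= /intensity !ffactE /= ?subSS ?subn0; ring.
Qed.

Lemma W3_weight_cross_ratio : exists2 Q : R, 0 < Q &
  W3_weight (1, 0) * W3_weight (2, 1) * W3_weight (0, 2)
    - W3_weight (0, 1) * W3_weight (1, 2) * W3_weight (2, 0) =
  Q * (beta ^+ 2 * l1 - alpha ^+ 2 * l2).
Proof.
exists (6 * (alpha ^+ 2 * l2 + 2 * alpha * l1 * l2 + beta ^+ 2 * l1 + 2 * beta * l1 * l2)).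
  by rewrite ?(addr_gt0, mulr_gt0, exprn_gt0, ltr0n).
by rewrite /=; ring.
Qed.

Lemma W3_product_form_detailed_balanced :
  has_product_form N -> detailed_balanced W3_pairs (beta, alpha).
Proof.
case=> f1 [f2 [_ _ pf]].
have f_level n : (0 < n <= 3)%N -> exists2 K, K != 0 &
    forall i j, (i, j) \in level n -> f1 i * f2 j = K * W3_weight (i, j).
  move=> n_range; apply: product_form_proportional pf _ _ (W3_weight_balance n_range).
    exact: W3_level_pr_component.
  by move=> x; apply: W3_weight_gt0.
have [K1 K1_neq0 f_1] := f_level 1%N isT.
have [K2 K2_neq0 f_2] := f_level 2%N isT.
have [K3 K3_neq0 f_3] := f_level 3%N isT.
have [Q Q_gt0 cross_ratio] := W3_weight_cross_ratio.
have K_neq0 : K1 * K2 * K3 != 0 by rewrite !mulf_eq0 !negb_or K1_neq0 K2_neq0 K3_neq0.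
have : K1 * K2 * K3 * (Q * (beta ^+ 2 * l1 - alpha ^+ 2 * l2)) = 0.
  rewrite -cross_ratio; transitivity
    (K1 * W3_weight (1, 0) * (K3 * W3_weight (2, 1)) * (K2 * W3_weight (0, 2))
     - K1 * W3_weight (0, 1) * (K3 * W3_weight (1, 2)) * (K2 * W3_weight (2, 0))); first ring.
  by rewrite -!f_1 // -!f_2 // -!f_3 //; ring.
move/eqP; rewrite mulf_eq0 (negbTE K_neq0) mulf_eq0 (gt_eqF Q_gt0) subr_eq0 => /eqP db2.
apply/detailed_balanced2; rewrite /monom /= !expr0 !expr1 !mulr1 !mul1r.
by split; [exact: mulrC | rewrite mulrC db2 mulrC].
Qed.

Lemma W3_complex_balancedE : complex_balanced N <->
  exists c : R * R, [/\ 0 < c.1, 0 < c.2 & detailed_balanced W3_pairs c].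
Proof.
split=> -[c [c1_gt0 c2_gt0 c_bal]]; exists c; split=> //.
  have := c_bal (0, 1)%N; have := c_bal (0, 2)%N.
  by rewrite !big_cons !big_nil /= !addr0 => db2 db1; apply/detailed_balanced2.
move/detailed_balanced2: c_bal => [db1 db2] eta; rewrite !big_cons !big_nil.
have [->|_] := eqVneq eta (1, 0)%N; first by rewrite /= !addr0 db1.
have [->|_] := eqVneq eta (0, 1)%N; first by rewrite /= !addr0 db1.
have [->|_] := eqVneq eta (2, 0)%N; first by rewrite /= !addr0 db2.
have [->|_] := eqVneq eta (0, 2)%N; first by rewrite /= !addr0 db2.
by [].
Qed.

Lemma W3_product_form_iff : has_product_form N <-> complex_balanced N.
Proof.
rewrite W3_complex_balancedE; split=> [/W3_product_form_detailed_balanced db|].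
  by exists (beta, alpha).
case=> c [c1_gt0 c2_gt0 c_db]; rewrite W3_reversible.
by apply: reversible_product_form c_db => //; rewrite -W3_reversible; exact: W3_nonneg_rates.
Qed.

End W3.

Section W4.
Variables (R : realType) (l3 l5 l1 l2 : R).
Hypotheses (l3_gt0 : 0 < l3) (l5_gt0 : 0 < l5) (l1_gt0 : 0 < l1) (l2_gt0 : 0 < l2).
Local Notation N := (W4 l3 l5 l1 l2).

Definition W4_pairs : seq (state * state * R * R) :=
  [:: ((2, 0), (1, 1), l3, l5); ((2, 0), (0, 2), l1, l2)]%N.

Lemma W4_reversible : N = reversible W4_pairs.
Proof. by []. Qed.

Lemma W4_nonneg_rates : nonneg_rates N.
Proof. by move=> r; rewrite !inE => /or4P[] /eqP-> /=; apply: ltW. Qed.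

Lemma W4_conservative : conservative N.
Proof. by move=> r; rewrite !inE => /or4P[] /eqP->. Qed.

Lemma W4_reach_2S1_to_S1S2 i j : reach N (i.+2, j) (i.+1, j.+1).
Proof. by apply: (@reaction_reach _ _ (2, 0) (1, 1) l3 (i, j)); rewrite ?inE ?eqxx. Qed.

Lemma W4_reach_S1S2_to_2S1 i j : reach N (i.+1, j.+1) (i.+2, j).
Proof. by apply: (@reaction_reach _ _ (1, 1) (2, 0) l5 (i, j)); rewrite ?inE ?eqxx ?orbT. Qed.

Lemma W4_reach_2S1_to_2S2 i j : reach N (i.+2, j) (i, j.+2).
Proof. by apply: (@reaction_reach _ _ (2, 0) (0, 2) l1 (i, j)); rewrite ?inE ?eqxx ?orbT. Qed.

Lemma W4_reach_2S2_to_2S1 i j : reach N (i, j.+2) (i.+2, j).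
Proof. by apply: (@reaction_reach _ _ (0, 2) (2, 0) l2 (i, j)); rewrite ?inE ?eqxx ?orbT. Qed.

Lemma W4_level_pr_component n : pr_component N (level n.+2).
Proof.
apply: level_pr_component W4_conservative _.
have to_hub i j : reach N (i.+1, j) (1, i + j)%N.
  elim: i j => [|i IH] j; first exact: rt_refl.
  by rewrite addSnnS; apply: rt_trans (W4_reach_2S1_to_S1S2 i j) (IH j.+1).
have from_hub i j : reach N (1, i + j)%N (i.+1, j).
  elim: i j => [|i IH] j; first exact: rt_refl.
  by rewrite addSnnS; apply: rt_trans (IH j.+1) (W4_reach_S1S2_to_2S1 i j).
have hub x : x \in level n.+2 -> reach N x (1, n.+1)%N /\ reach N (1, n.+1)%N x.
  rewrite mem_level; case: x => [[|i] j] /= /eqP; last by rewrite addSn => -[<-].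
  rewrite add0n => ->; split.
    exact: rt_trans (W4_reach_2S2_to_2S1 0 n) (W4_reach_2S1_to_S1S2 0 n).
  exact: rt_trans (W4_reach_S1S2_to_2S1 0 n) (W4_reach_2S1_to_2S2 0 n).
by move=> x y /hub[x_hub _] /hub[_ hub_y]; apply: rt_trans x_hub hub_y.
Qed.

(* As for [W3_weight], on the slices x1 + x2 = 2, 3, 4. *)
Definition W4_weight (x : state) : R :=
  match x with
  | (2, 0)%N => l5 * l2
  | (1, 1)%N => 2 * l3 * l2
  | (0, 2)%N => l5 * l1
  | (3, 0)%N => l3 * l2 ^+ 2 + l5 ^+ 2 * l2 + l5 * l2 ^+ 2
  | (2, 1)%N => 3 * l3 * l5 * l2 + 3 * l3 * l2 ^+ 2 + 3 * l5 * l1 * l2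
  | (1, 2)%N => 3 * l3 ^+ 2 * l2 + 3 * l3 * l1 * l2 + 3 * l5 * l1 * l2
  | (0, 3)%N => l3 * l5 * l1 + l3 * l1 * l2 + l5 * l1 ^+ 2
  | (4, 0)%N => 4 * l3 * l5 * l2 ^+ 2 + 4 * l3 * l2 ^+ 3 + 2 * l5 ^+ 3 * l2
                + 5 * l5 ^+ 2 * l2 ^+ 2 + 2 * l5 * l1 * l2 ^+ 2 + 2 * l5 * l2 ^+ 3
  | (3, 1)%N => 8 * l3 ^+ 2 * l2 ^+ 2 + 8 * l3 * l5 ^+ 2 * l2 + 20 * l3 * l5 * l2 ^+ 2
                + 8 * l3 * l1 * l2 ^+ 2 + 8 * l3 * l2 ^+ 3 + 8 * l5 ^+ 2 * l1 * l2
                + 16 * l5 * l1 * l2 ^+ 2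
  | (2, 2)%N => 12 * l3 ^+ 2 * l5 * l2 + 24 * l3 ^+ 2 * l2 ^+ 2 + 24 * l3 * l5 * l1 * l2
                + 24 * l3 * l1 * l2 ^+ 2 + 6 * l5 ^+ 2 * l1 * l2 + 12 * l5 * l1 ^+ 2 * l2
                + 12 * l5 * l1 * l2 ^+ 2
  | (1, 3)%N => 8 * l3 ^+ 3 * l2 + 16 * l3 ^+ 2 * l1 * l2 + 20 * l3 * l5 * l1 * l2
                + 8 * l3 * l1 ^+ 2 * l2 + 8 * l3 * l1 * l2 ^+ 2 + 16 * l5 * l1 ^+ 2 * l2
  | (0, 4)%N => 2 * l3 ^+ 2 * l5 * l1 + 4 * l3 ^+ 2 * l1 * l2 + 4 * l3 * l5 * l1 ^+ 2
                + 4 * l3 * l1 ^+ 2 * l2 + l5 ^+ 2 * l1 ^+ 2 + 2 * l5 * l1 ^+ 3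
                + 2 * l5 * l1 ^+ 2 * l2
  | _ => 0
  end.

Lemma W4_weight_gt0 n x : (2 <= n <= 4)%N -> x \in level n -> 0 < W4_weight x.
Proof.
case: n => [|[|[|[|[|//]]]]] // _ /levelP[[|[|[|[|[|i]]]]] //= _ ->];
  by rewrite ?(addr_gt0, mulr_gt0, exprn_gt0, ltr0n).
Qed.

Lemma W4_weight_balance n : (2 <= n <= 4)%N -> global_balance N (level n) W4_weight.
Proof.
case: n => [|[|[|[|[|//]]]]] // _ y /levelP[[|[|[|[|[|i]]]]] //= _ ->];
  rewrite /level /rate /= !big_cons !big_nil /= /intensity !ffactE /= ?subSS ?subn0; ring.
Qed.

Lemma W4_weight_cross_ratio : exists2 Q : R, 0 < Q &
  W4_weight (2, 1) * W4_weight (1, 3) * W4_weight (0, 2)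
    - W4_weight (2, 2) * W4_weight (1, 1) * W4_weight (0, 3) =
  Q * (l5 ^+ 2 * l1 - l3 ^+ 2 * l2).
Proof.
exists (48 * l1 * l2 ^+ 2 * (l3 ^+ 2 * l5 + l3 ^+ 2 * l2 + 2 * l3 * l5 * l1
                             + l3 * l1 * l2 + l5 * l1 ^+ 2)).
  by rewrite ?(addr_gt0, mulr_gt0, exprn_gt0, ltr0n).
by rewrite /=; ring.
Qed.

Lemma W4_product_form_detailed_balanced :
  has_product_form N -> detailed_balanced W4_pairs (l5, l3).
Proof.
case=> f1 [f2 [_ _ pf]].
have f_level n : (2 <= n <= 4)%N -> exists2 K, K != 0 &
    forall i j, (i, j) \in level n -> f1 i * f2 j = K * W4_weight (i, j).
  move=> n_range; apply: product_form_proportional pf _ _ (W4_weight_balance n_range).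
    by case: n n_range => [|[|n _]] //; exact: W4_level_pr_component.
  by move=> x; apply: W4_weight_gt0.
have [K2 K2_neq0 f_2] := f_level 2%N isT.
have [K3 K3_neq0 f_3] := f_level 3%N isT.
have [K4 K4_neq0 f_4] := f_level 4%N isT.
have [Q Q_gt0 cross_ratio] := W4_weight_cross_ratio.
have K_neq0 : K2 * K3 * K4 != 0 by rewrite !mulf_eq0 !negb_or K2_neq0 K3_neq0 K4_neq0.
have : K2 * K3 * K4 * (Q * (l5 ^+ 2 * l1 - l3 ^+ 2 * l2)) = 0.
  rewrite -cross_ratio; transitivity
    (K3 * W4_weight (2, 1) * (K4 * W4_weight (1, 3)) * (K2 * W4_weight (0, 2))
     - K4 * W4_weight (2, 2) * (K2 * W4_weight (1, 1)) * (K3 * W4_weight (0, 3))); first ring.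
  by rewrite -!f_2 // -!f_3 // -!f_4 //; ring.
move/eqP; rewrite mulf_eq0 (negbTE K_neq0) mulf_eq0 (gt_eqF Q_gt0) subr_eq0 => /eqP db2.
apply/detailed_balanced2; rewrite /monom /= !expr0 !expr1 !mulr1 !mul1r.
by split; [ring | rewrite mulrC db2 mulrC].
Qed.

Lemma W4_complex_balancedE : complex_balanced N <->
  exists c : R * R, [/\ 0 < c.1, 0 < c.2 & detailed_balanced W4_pairs c].
Proof.
split=> -[c [c1_gt0 c2_gt0 c_bal]]; exists c; split=> //.
  have := c_bal (1, 1)%N; have := c_bal (0, 2)%N.
  by rewrite !big_cons !big_nil /= !addr0 => db2 db1; apply/detailed_balanced2.
move/detailed_balanced2: c_bal => [db1 db2] eta; rewrite !big_cons !big_nil.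
have [->|_] := eqVneq eta (2, 0)%N; first by rewrite /= !addr0 -db1 -db2; ring.
have [->|_] := eqVneq eta (1, 1)%N; first by rewrite /= !addr0 db1.
have [->|_] := eqVneq eta (0, 2)%N; first by rewrite /= !addr0 db2.
by [].
Qed.

Lemma W4_product_form_iff : has_product_form N <-> complex_balanced N.
Proof.
rewrite W4_complex_balancedE; split=> [/W4_product_form_detailed_balanced db|].
  by exists (l5, l3).
case=> c [c1_gt0 c2_gt0 c_db]; rewrite W4_reversible.
apply: reversible_product_form c_db => //; rewrite -W4_reversible; exact: W4_nonneg_rates.
Qed.
End W4.

Theorem lemma4p3 (R : realType) :
  (forall alpha beta l1 l2 : R, 0 < alpha -> 0 < beta -> 0 < l1 -> 0 < l2 ->
     has_product_form (W3 alpha beta l1 l2) <->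
     complex_balanced (W3 alpha beta l1 l2)) /\
  (forall l3 l5 l1 l2 : R, 0 < l3 -> 0 < l5 -> 0 < l1 -> 0 < l2 ->
     has_product_form (W4 l3 l5 l1 l2) <->
     complex_balanced (W4 l3 l5 l1 l2)).
Proof.
split=> [alpha beta l1 l2 *|l3 l5 l1 l2 *].
  exact: W3_product_form_iff.
exact: W4_product_form_iff.
Qed.
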